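(* The generating function of the Stern polynomials satisfies $$\sum_{n=0}^{\infty}B_n(t)x^{n}=x\prod_{k=0}^{\infty}\bigl(1+tx^{2^{k}}+x^{2^{k+1}}\bigr)$$ as formal power series in $x$ with coefficients in $\mathbb{Z}[t]$; moreover, for every real $t$ and every real $x$ with $|x|<1$, both the series and the infinite product converge and are equal.
   Context: The Stern polynomials $B_n(t)\in\mathbb{Z}[t]$, $n\ge 0$, are defined by $B_0(t)=0$, $B_1(t)=1$, $B_{2n}(t)=tB_n(t)$ and $B_{2n+1}(t)=B_n(t)+B_{n+1}(t)$ for $n\ge 1$. *)

From HB Require Import structures.
From mathcomp Require Import all_boot all_order all_algebra.
From Stdlib Require Import ZArith Reals.
Set Implicit Arguments. Unset Strict Implicit. Unset Printing Implicit Defensive.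
Import GRing.Theory.

Section MC.
Local Open Scope ring_scope.

(* A fuel argument makes the (non-structural) recursion definable;
   fuel n.+1 is always sufficient for index n. *)
Fixpoint stern_aux (fuel n : nat) : {poly int} :=
  match fuel with
  | 0 => 0
  | f.+1 =>
    if n == 0 then 0 else
    if n == 1 then 1 else
    if odd n then (stern_aux f n./2 + stern_aux f n./2.+1)
    else ('X * stern_aux f n./2)
  end.

Definition stern (n : nat) : {poly int} := stern_aux n.+1 n.

(* Formal side: the truncated product  x * prod_{k<K} (1 + t x^(2^k) + x^(2^(k+1)))
   in Z[t][x] = {poly {poly int}}; outer 'X is x, inner ('X)%:P is t. *)
Definition stern_factor (k : nat) : {poly {poly int}} :=
  (1 + ('X)%:P * 'X^(2 ^ k) + 'X^(2 ^ k.+1)).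

Definition stern_partial_prod (K : nat) : {poly {poly int}} :=
  ('X * \prod_(k < K) stern_factor k).

End MC.

Definition int_to_Z (c : int) : Z :=
  match c with
  | Posz n => Z.of_nat n
  | Negz n => (- (Z.of_nat n + 1))%Z
  end.

Definition evalR (p : {poly int}) (t : R) : R :=
  foldr (fun c acc => (IZR (int_to_Z c) + t * acc)%R) 0%R (polyseq p).

Fixpoint stern_prodR (t x : R) (K : nat) : R :=
  match K with
  | 0 => 1%R
  | K'.+1 => (stern_prodR t x K' *
              (1 + t * x ^ (Nat.pow 2 K') + x ^ (Nat.pow 2 K'.+1)))%R
  end.

(* Write Q_K(t, x) = x * prod_{k<K} f_k  with  f_k = 1 + t x^(2^k) + x^(2^(k+1)).  Substituting x^2 for x maps f_k to f_(k+1), which gives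
   Q_(K+1)(x) x = f_0(x) Q_K(x^2).  Comparing coefficients shows that the
   coefficients c_K(n) of x^n in Q_K satisfy the Stern recursion
   c_(K+1)(2m) = t c_K(m),  c_(K+1)(2m+1) = c_K(m) + c_K(m+1),  with c_0(n) = [n = 1];
   by induction on K, c_K(n) = B_n(t) for all n <= 2^K.  Evaluating at real t, the same recursion shows
   |c_K(n)(t)| <= c_K(n)(|t|) <= B_n(|t|).  Hence, for 0 <= r < 1, the partial
   sums of sum B_n(|t|) r^n up to 2^K are at most r * prod_{k<K} f_k(|t|, r),
   which is bounded by exp((|t| + 1)/(1 - r)); so the series converges
   absolutely.  Finally x prod_{k<K} f_k(t, x) minus the partial sum up to 2^K
   is a tail dominated by the remainder of the absolutely convergent series,
   so the partial products converge to the sum of the series. *)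

From HB Require Import structures.
From mathcomp Require Import all_boot all_order all_algebra.
From mathcomp Require Import zify Rstruct.
From Stdlib Require Import Reals Lra.
Set Implicit Arguments. Unset Strict Implicit. Unset Printing Implicit Defensive.
Import Order.TTheory GRing.Theory Num.Theory.
Local Open Scope ring_scope.

Lemma stern_aux_fuel f1 f2 n : (n < f1)%nat -> (n < f2)%nat ->
  stern_aux f1 n = stern_aux f2 n.
Proof.
elim: f1 f2 n => [|f1 IH] [|f2] n lt_n1 lt_n2 //=.
case: (n =P 0%nat) => // n_neq0; case: (n =P 1%nat) => // n_neq1.
case: ifP => odd_n; last by rewrite (IH f2) //; lia.
by rewrite (IH f2 n./2) ?(IH f2 n./2.+1) //; lia.
Qed.

Lemma stern_auxE f n : (n < f)%nat -> stern_aux f n = stern n.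
Proof. by move=> lt_nf; apply: stern_aux_fuel. Qed.

Lemma stern_aux_succ f n : stern_aux f.+1 n =
  if n == 0%nat then 0 else if n == 1%nat then 1 else
  if odd n then stern_aux f n./2 + stern_aux f n./2.+1 else 'X * stern_aux f n./2.
Proof. by []. Qed.

Lemma stern_rec n : (1 < n)%nat ->
  stern n = if odd n then stern n./2 + stern n./2.+1 else 'X * stern n./2.
Proof.
move=> lt1n; rewrite {1}/stern stern_aux_succ ifN_eq ?ifN_eq; try lia.
by have := odd_double_half n; case: ifP => /= odd_n n_eq; rewrite !stern_auxE //; lia.
Qed.

Lemma stern_double m : stern (2 * m)%nat = 'X * stern m.
Proof.
case: m => [|m]; first by rewrite muln0 mulr0.
by rewrite mul2n stern_rec ?odd_double ?doubleK //; lia.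
Qed.

Lemma stern_double_succ m : stern (2 * m)%nat.+1 = stern m + stern m.+1.
Proof.
case: m => [|m]; first by rewrite add0r.
by rewrite mul2n stern_rec // ssrnat.oddS odd_double /= uphalf_double.
Qed.

Lemma Nat_powE m k : Nat.pow m k = expn m k.
Proof. by elim: k => // k IH; rewrite expnS -IH. Qed.

Lemma leq_expn2 k : (k <= expn 2 k)%nat.
Proof. exact/ltnW/ltn_expl. Qed.

Lemma comp_stern_factor k : stern_factor k \Po 'X^2 = stern_factor k.+1.
Proof.
rewrite /stern_factor !comp_polyD comp_polyM !comp_polyC !comp_Xn_poly rmorph1.
by rewrite !Nat_powE -!exprM -!expnS.
Qed.

Lemma partial_prod_succ K :
  stern_partial_prod K.+1 * 'X = stern_factor 0 * (stern_partial_prod K \Po 'X^2).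
Proof.
rewrite /stern_partial_prod comp_polyM comp_polyX rmorph_prod big_ord_recl /=.
under [in RHS]eq_bigr => k _ do rewrite comp_stern_factor.
by rewrite [LHS]mulrAC -expr2 mulrCA.
Qed.

(* The same recursion, split by parity of the exponents:
   Q_(K+1)(x) x = ((1 + x) Q_K(x))(x^2) + t x Q_K(x^2). *)
Lemma partial_prod_succ_split K :
  stern_partial_prod K.+1 * 'X =
  ((1 + 'X) * stern_partial_prod K) \Po 'X^2
  + ('X)%:P * ('X * (stern_partial_prod K \Po 'X^2)).
Proof.
rewrite partial_prod_succ (comp_polyM (1 + 'X)) comp_polyD comp_polyX rmorph1 /stern_factor.
rewrite !Nat_powE expn0 expn1 expr1.
by rewrite !mulrDl -mulrA addrAC.
Qed.

Lemma coef_partial_prod0 n : (stern_partial_prod 0)`_n = (n == 1)%:R.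
Proof. by rewrite /stern_partial_prod big_ord0 mulr1 coefX. Qed.

Lemma coef_partial_prod_succ K n :
  (stern_partial_prod K.+1)`_n
  = (((1 + 'X) * stern_partial_prod K) \Po 'X^2)`_n.+1
    + 'X * (stern_partial_prod K \Po 'X^2)`_n.
Proof.
have := congr1 (coefp n.+1) (partial_prod_succ_split K).
by rewrite /= coefMX coefD coefCM (coefXM (_ \Po _)).
Qed.

Lemma coef_partial_prod_double K m :
  (stern_partial_prod K.+1)`_(2 * m) = 'X * (stern_partial_prod K)`_m.
Proof.
rewrite coef_partial_prod_succ !coef_comp_poly_Xn // !dvdn2.
by rewrite ssrnat.oddS ssrnat.oddM mulKn // add0r.
Qed.

Lemma coef_partial_prod_double_succ K m :
  (stern_partial_prod K.+1)`_(2 * m).+1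
  = (stern_partial_prod K)`_m + (stern_partial_prod K)`_m.+1.
Proof.
rewrite coef_partial_prod_succ !coef_comp_poly_Xn // !dvdn2.
rewrite (_ : (2 * m).+2 = 2 * m.+1)%nat; last by lia.
rewrite ssrnat.oddS !ssrnat.oddM mulr0 addr0 mulKn //.
by rewrite mulrDl mul1r coefD coefXM addrC.
Qed.

Lemma double_or_double_succ n : exists m, n = (2 * m)%nat \/ n = (2 * m).+1.
Proof.
exists n./2; rewrite -{1 3}(odd_double_half n) -mul2n.
by case: (odd n); [right | left].
Qed.

Lemma coef_partial_prod K n : (n <= expn 2 K)%nat -> (stern_partial_prod K)`_n = stern n.
Proof.
elim: K n => [|K IH] n le_n_2K.
  by rewrite coef_partial_prod0; case: n le_n_2K => [|[|]].
rewrite expnS in le_n_2K.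
have [m [n_eq|n_eq]] := double_or_double_succ n; rewrite {}n_eq in le_n_2K *.
  by rewrite coef_partial_prod_double stern_double IH //; lia.
by rewrite coef_partial_prod_double_succ stern_double_succ !IH //; lia.
Qed.

(* Evaluation at a real t is the ring morphism {poly int} -> R extending the
   embedding int -> R and sending 'X to t. *)
Definition intr_comm (t : R) : commr_rmorph (intr : {rmorphism int -> R}) t :=
  fun c => mulrC _ _.

Lemma IZR_int_to_Z (c : int) : IZR (int_to_Z c) = c%:~R.
Proof.
case: c => n /=; first by rewrite -INR_IZR_INZ INRE.
rewrite NegzE opp_IZR plus_IZR -INR_IZR_INZ INRE mulrNz.
by rewrite RoppE RplusE R1E natr1.
Qed.

Lemma evalR_horner_morph (p : {poly int}) (t : R) :
  evalR p t = horner_morph (intr_comm t) p.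
Proof.
rewrite /evalR /horner_morph map_polyE horner_Poly.
elim: (polyseq p) => [|c s IH] //=.
by rewrite IH IZR_int_to_Z addrC mulrC.
Qed.

Definition stern_val (t : R) (n : nat) : R := evalR (stern n) t.
Definition coef_val (t : R) (K i : nat) : R :=
  evalR ((stern_partial_prod K)`_i) t.

Lemma stern_val_double t m : stern_val t (2 * m)%nat = (t * stern_val t m)%R.
Proof. by rewrite /stern_val !evalR_horner_morph stern_double rmorphM /= horner_morphX. Qed.

Lemma stern_val_double_succ t m :
  stern_val t (2 * m)%nat.+1 = (stern_val t m + stern_val t m.+1)%R.
Proof. by rewrite /stern_val !evalR_horner_morph stern_double_succ rmorphD. Qed.

Lemma coef_val0 t i : coef_val t 0 i = if i == 1%nat then 1%R else 0%R.
Proof.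
rewrite /coef_val evalR_horner_morph coef_partial_prod0.
by case: eqP; rewrite ?rmorph1 ?rmorph0.
Qed.

Lemma coef_val_double t K m :
  coef_val t K.+1 (2 * m)%nat = (t * coef_val t K m)%R.
Proof.
by rewrite /coef_val !evalR_horner_morph coef_partial_prod_double rmorphM /= horner_morphX.
Qed.

Lemma coef_val_double_succ t K m :
  coef_val t K.+1 (2 * m)%nat.+1 = (coef_val t K m + coef_val t K m.+1)%R.
Proof. by rewrite /coef_val !evalR_horner_morph coef_partial_prod_double_succ rmorphD. Qed.

Lemma coef_val_stern t K n : (n <= expn 2 K)%nat -> coef_val t K n = stern_val t n.
Proof. by move=> le_n_2K; rewrite /coef_val coef_partial_prod. Qed.

Lemma coef_val_abs t K i : (Rabs (coef_val t K i) <= coef_val (Rabs t) K i)%R.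
Proof.
elim: K i => [|K IH] i.
  rewrite !coef_val0; case: eqP => _; rewrite ?Rabs_R1 ?Rabs_R0; lra.
have [m [->|->]] := double_or_double_succ i.
  rewrite !coef_val_double Rabs_mult.
  by apply: Rmult_le_compat_l; [apply: Rabs_pos | apply: IH].
rewrite !coef_val_double_succ; apply: Rle_trans (Rabs_triang _ _) _.
by apply: Rplus_le_compat; apply: IH.
Qed.

Lemma coef_val_nonneg s K i : (0 <= s)%R -> (0 <= coef_val s K i)%R.
Proof.
move=> s_ge0; have := coef_val_abs s K i; rewrite (Rabs_pos_eq s) //.
have := Rabs_pos (coef_val s K i); lra.
Qed.

Lemma stern_val_abs t n : (Rabs (stern_val t n) <= stern_val (Rabs t) n)%R.
Proof. by rewrite -!(coef_val_stern _ (leq_expn2 n)); apply: coef_val_abs. Qed.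

Lemma stern_val_nonneg s n : (0 <= s)%R -> (0 <= stern_val s n)%R.
Proof. by rewrite -(coef_val_stern _ (leq_expn2 n)); apply: coef_val_nonneg. Qed.

Lemma coef_val_le_stern s K i : (0 <= s)%R -> (coef_val s K i <= stern_val s i)%R.
Proof.
move=> s_ge0; elim: K i => [|K IH] i.
  rewrite coef_val0; case: eqP => [->|_]; last exact: stern_val_nonneg.
  by rewrite -(coef_val_stern s (K := 0)) // coef_val0 eqxx; lra.
have [m [->|->]] := double_or_double_succ i.
  by rewrite coef_val_double stern_val_double; apply: Rmult_le_compat_l.
by rewrite coef_val_double_succ stern_val_double_succ; apply: Rplus_le_compat.
Qed.

Local Notation eval_coefs t := (map_poly (horner_morph (intr_comm t))).

Lemma eval_stern_factor t x k :
  (eval_coefs t (stern_factor k)).[x]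
  = (1 + t * x ^ Nat.pow 2 k + x ^ Nat.pow 2 k.+1)%R.
Proof.
rewrite /stern_factor !rmorphD rmorph1 rmorphM /= map_polyC !map_polyXn /=.
by rewrite !hornerE horner_morphX !RpowE.
Qed.

Lemma eval_partial_prod t x K :
  (eval_coefs t (stern_partial_prod K)).[x] = (x * stern_prodR t x K)%R.
Proof.
rewrite /stern_partial_prod rmorphM rmorph_prod /= map_polyX hornerM hornerX horner_prod.
congr (_ * _); elim: K => [|K IH]; first by rewrite big_ord0.
by rewrite big_ord_recr /= IH eval_stern_factor.
Qed.

Lemma partial_prod_coef_sum t x K N : (size (stern_partial_prod K) <= N)%nat ->
  (x * stern_prodR t x K)%R = \sum_(0 <= i < N) coef_val t K i * x ^+ i.
Proof.
move=> le_size_N; rewrite -eval_partial_prod (horner_coef_wide _ (n := N)).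
  by rewrite big_mkord; apply: eq_bigr => i _; rewrite coef_map /coef_val evalR_horner_morph.
by rewrite map_polyE (leq_trans (size_Poly _)) ?size_map.
Qed.

Lemma sum_f_R0_big (F : nat -> R) n : sum_f_R0 F n = \sum_(0 <= i < n.+1) F i.
Proof. by elim: n => [|n IH]; rewrite ?big_nat1 // big_nat_recr //= IH. Qed.

Definition stern_term (t x : R) (n : nat) : R := (stern_val t n * x ^ n)%R.

Definition prod_tail (t x : R) (K : nat) : R :=
  \sum_((expn 2 K).+1 <= i < (size (stern_partial_prod K) + expn 2 K).+1)
     coef_val t K i * x ^+ i.

Lemma partial_prod_split t x K :
  (x * stern_prodR t x K)%R
  = (sum_f_R0 (stern_term t x) (expn 2 K) + prod_tail t x K)%R.
Proof.
rewrite (partial_prod_coef_sum _ _ (leq_addr (expn 2 K).+1 _)) addnS.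
rewrite (big_cat_nat (n := (expn 2 K).+1)) ?ltnS ?leq_addl //= sum_f_R0_big.
congr (_ + _); apply: eq_big_nat => i /andP[_ lt_i_2K].
by rewrite /stern_term coef_val_stern ?RpowE.
Qed.

Lemma prod_tail_nonneg s r K : (0 <= s)%R -> (0 <= r)%R -> (0 <= prod_tail s r K)%R.
Proof.
move=> s_ge0 r_ge0; apply/RleP; apply: sumr_ge0 => i _; apply/RleP.
by rewrite -RpowE; apply: Rmult_le_pos; [apply: coef_val_nonneg | apply: pow_le].
Qed.

Lemma prod_tail_abs t x K :
  let A := stern_term (Rabs t) (Rabs x) in
  (Rabs (prod_tail t x K)
   <= sum_f_R0 A (size (stern_partial_prod K) + expn 2 K) - sum_f_R0 A (expn 2 K))%R.
Proof.
move=> A; rewrite !sum_f_R0_big (big_cat_nat (n := (expn 2 K).+1)) ?ltnS ?leq_addl //=.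
rewrite RminusE addrAC subrr add0r (_ : Rabs _ = `|prod_tail t x K|) //.
apply/RleP.
apply: le_trans (ler_norm_sum _ _ _) _; apply: ler_sum => i _; apply/RleP.
rewrite /A /stern_term -RpowE (_ : `|_| = Rabs (coef_val t K i * x ^ i)) //.
rewrite Rabs_mult RPow_abs.
apply: Rmult_le_compat_r; first exact: Rabs_pos.
exact: Rle_trans (coef_val_abs _ _ _) (coef_val_le_stern _ _ (Rabs_pos _)).
Qed.

Section ProductBound.
Local Open Scope R_scope.

Lemma pow_le_decr r m n : 0 <= r <= 1 -> (m <= n)%nat -> r ^ n <= r ^ m.
Proof.
move=> r_01 le_mn; rewrite -(subnKC le_mn) pow_add.
have := pow_le r m (proj1 r_01); have := pow_le r (n - m) (proj1 r_01).
have := pow_incr r 1 (n - m) r_01; rewrite pow1; nra.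
Qed.

(* Each factor is at most 1 + (s + 1) r^k, since 2^k and 2^(k+1) are >= k. *)
Lemma stern_factor_le s r k : 0 <= s -> 0 <= r <= 1 ->
  1 + s * r ^ Nat.pow 2 k + r ^ Nat.pow 2 k.+1 <= 1 + (s + 1) * r ^ k.
Proof.
move=> s_ge0 r_01.
have := pow_le_decr r_01 (leq_expn2 k); rewrite -Nat_powE.
have := pow_le_decr r_01 (leq_trans (leqnSn k) (leq_expn2 k.+1)); rewrite -Nat_powE.
have := pow_le r (Nat.pow 2 k) (proj1 r_01); nra.
Qed.

(* Using 1 + y <= exp y factorwise:
   prod_{k<K} f_k(s, r) <= exp((s + 1)(1 + r + ... + r^(K-1))). *)
Lemma stern_prodR_bound_geom s r K : 0 <= s -> 0 <= r < 1 ->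
  0 <= stern_prodR s r K <= exp ((s + 1) * (1 - r ^ K) / (1 - r)).
Proof.
move=> s_ge0 r_01; elim: K => [|K [prod_ge0 prod_le]].
  rewrite /= (_ : (s + 1) * (1 - 1) / (1 - r) = 0) ?exp_0; [lra | field; lra].
have r_le1 : 0 <= r <= 1 by lra.
have factor_le := stern_factor_le K s_ge0 r_le1.
have factor_ge1 : 1 <= 1 + s * r ^ Nat.pow 2 K + r ^ Nat.pow 2 K.+1.
  have := Rmult_le_pos _ _ s_ge0 (pow_le r (Nat.pow 2 K) (proj1 r_01)).
  have := pow_le r (Nat.pow 2 K.+1) (proj1 r_01); lra.
have := exp_ineq1_le ((s + 1) * r ^ K).
rewrite (_ : (s + 1) * (1 - r ^ K.+1) / (1 - r)
             = (s + 1) * (1 - r ^ K) / (1 - r) + (s + 1) * r ^ K); last first.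
  by rewrite /=; field; lra.
rewrite exp_plus => exp_ge.
change (stern_prodR s r K.+1)
  with (stern_prodR s r K * (1 + s * r ^ Nat.pow 2 K + r ^ Nat.pow 2 K.+1)).
split; first nra.
by apply: Rmult_le_compat; lra.
Qed.

Lemma stern_prodR_bound s r K : 0 <= s -> 0 <= r < 1 ->
  0 <= stern_prodR s r K <= exp ((s + 1) / (1 - r)).
Proof.
move=> s_ge0 r_01; have [prod_ge0 prod_le] := stern_prodR_bound_geom K s_ge0 r_01.
split=> //; apply: Rle_trans prod_le _.
have le_exponent : (s + 1) * (1 - r ^ K) / (1 - r) <= (s + 1) / (1 - r).
  rewrite /Rdiv; apply: Rmult_le_compat_r; first by apply/Rlt_le/Rinv_0_lt_compat; lra.
  have := pow_le r K (proj1 r_01); nra.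
case: (Rle_lt_or_eq_dec _ _ le_exponent) => [lt_exp|->]; last exact: Rle_refl.
exact/Rlt_le/exp_increasing.
Qed.

End ProductBound.

Section Convergence.
Local Open Scope R_scope.

Lemma sum_f_R0_growing (A : nat -> R) : (forall n, 0 <= A n) -> Un_growing (sum_f_R0 A).
Proof. by move=> A_ge0 n /=; have := A_ge0 n.+1; lra. Qed.

Lemma stern_term_nonneg s r n : 0 <= s -> 0 <= r -> 0 <= stern_term s r n.
Proof. by move=> s_ge0 r_ge0; apply: Rmult_le_pos; [apply: stern_val_nonneg | apply: pow_le]. Qed.

Lemma stern_term_abs t x n : Rabs (stern_term t x n) <= stern_term (Rabs t) (Rabs x) n.
Proof.
rewrite /stern_term Rabs_mult -RPow_abs.
apply: Rmult_le_compat_r; [apply: pow_le; apply: Rabs_pos | apply: stern_val_abs].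
Qed.

(* For s >= 0 and 0 <= r < 1 the partial sums of sum B_n(s) r^n are bounded:
   the one up to 2^n is at most r prod_{k<n} f_k(s, r). *)
Lemma stern_series_bounded s r n : 0 <= s -> 0 <= r < 1 ->
  sum_f_R0 (stern_term s r) n <= r * exp ((s + 1) / (1 - r)).
Proof.
move=> s_ge0 r_01.
have growing : Un_growing (sum_f_R0 (stern_term s r)).
  by apply: sum_f_R0_growing => m; apply: stern_term_nonneg; lra.
have := growing_prop _ _ _ growing (ssrnat.leP (leq_expn2 n)).
have := prod_tail_nonneg n s_ge0 (proj1 r_01).
have := stern_prodR_bound n s_ge0 r_01.
have := partial_prod_split s r n.
have := exp_pos ((s + 1) / (1 - r)); nra.
Qed.

Lemma stern_abs_series_cv t x : Rabs x < 1 ->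
  {L | Un_cv (sum_f_R0 (stern_term (Rabs t) (Rabs x))) L}.
Proof.
move=> x_lt1; have r_01 : 0 <= Rabs x < 1 by split; [apply: Rabs_pos | lra].
apply: growing_cv.
  by apply: sum_f_R0_growing => n; apply: stern_term_nonneg; apply: Rabs_pos.
exists (Rabs x * exp ((Rabs t + 1) / (1 - Rabs x))) => _ [n ->].
exact: stern_series_bounded (Rabs_pos t) r_01.
Qed.

Lemma stern_series_cv t x : Rabs x < 1 -> {S | Un_cv (sum_f_R0 (stern_term t x)) S}.
Proof.
move=> x_lt1; apply/cv_cauchy_2/cauchy_abs/cv_cauchy_1.
apply: (Rseries_CV_comp _ _ _ (stern_abs_series_cv t x_lt1)) => n.
by split; [apply: Rabs_pos | apply: stern_term_abs].
Qed.

Lemma stern_series_minus_product t x K S L :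
  Un_cv (sum_f_R0 (stern_term t x)) S ->
  Un_cv (sum_f_R0 (stern_term (Rabs t) (Rabs x))) L ->
  Rabs (x * stern_prodR t x K - S)
  <= 2 * (L - sum_f_R0 (stern_term (Rabs t) (Rabs x)) (expn 2 K)).
Proof.
move=> cv_S cv_L; set A := stern_term (Rabs t) (Rabs x).
have growing : Un_growing (sum_f_R0 A).
  by apply: sum_f_R0_growing => n; apply: stern_term_nonneg; apply: Rabs_pos.
have series_tail : Rabs (S - sum_f_R0 (stern_term t x) (expn 2 K))
                   <= L - sum_f_R0 A (expn 2 K).
  exact: (sum_maj1 (fun n _ => stern_term t x n) _ _ _ _ _ cv_S cv_L (stern_term_abs t x)).
have product_tail := prod_tail_abs t x K.
have := growing_ineq _ _ growing cv_L (size (stern_partial_prod K) + expn 2 K).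
rewrite partial_prod_split in product_tail *.
move: series_tail product_tail; rewrite -/A.
split_Rabs; lra.
Qed.

Lemma stern_series_product t x : Rabs x < 1 ->
  exists S, infinite_sum (stern_term t x) S
            /\ Un_cv (fun K => x * stern_prodR t x K) S.
Proof.
move=> x_lt1; have [S cv_S] := stern_series_cv t x_lt1.
have [L cv_L] := stern_abs_series_cv t x_lt1.
exists S; split=> // eps eps_gt0.
have [N close_L] := cv_L (eps / 2) ltac:(lra).
exists N => K /ssrnat.leP le_NK.
have := close_L (expn 2 K) (ssrnat.leP (leq_trans le_NK (leq_expn2 K))).
have := stern_series_minus_product K cv_S cv_L.
rewrite /R_dist; split_Rabs; lra.
Qed.

End Convergence.

Theorem theorem3p1 :
  (forall n : nat, exists K0 : nat, forall K : nat, leq K0 K ->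
      coefp n (stern_partial_prod K) = stern n)
  /\
  (forall t x : R, (Rabs x < 1)%R ->
     exists S : R,
       infinite_sum (fun n => (evalR (stern n) t * x ^ n)%R) S /\
       Un_cv (fun K => (x * stern_prodR t x K)%R) S).
Proof.
split; last exact: stern_series_product.
move=> n; exists n => K le_nK.
exact/coef_partial_prod/(leq_trans le_nK (leq_expn2 K)).
Qed.
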